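(* $\mathbf{M}=\boldsymbol{G}_N\mathbf{P}^t$.
   Context: Let $m\ge1$, $N=2^m$, $\mathbf{R}_m=\mathbb{F}_2[x_0,\dots,x_{m-1}]/(x_0^2-x_0,\dots,x_{m-1}^2-x_{m-1})$, and $\operatorname{ev}(Q)$ the evaluation vector of $Q\in\mathbf{R}_m$ at all points of $\mathbb{F}_2^m$. Let $\boldsymbol{G}_N=\begin{pmatrix}1&0\\1&1\end{pmatrix}^{\otimes m}$; row $i$ of $\boldsymbol{G}_N$ is $\operatorname{ev}$ of the monomial $x_0^{b_0}\cdots x_{m-1}^{b_{m-1}}$ with $(b_0,\dots,b_{m-1})$ the binary expansion of $2^m-1-i$. Let $\mathbf{P}\in\mathbb{F}_2^{N\times N}$ be upper triangular with ones on the diagonal (so $\mathcal{C}_{\mathbf{P}\boldsymbol{G}_N}(\mathcal{A})$, spanned by rows of $\mathbf{P}\boldsymbol{G}_N$ indexed by $\mathcal{A}$, is an upper polynomial polar code). For a monomial $h$, let $\check{h}=x_0\cdots x_{m-1}/h$ be its multiplicative complement; divisibility $f\mid g$ means the set of variables of $f$ is contained in that of $g$; $\operatorname{terms}(Q)$ is the set of monomials appearing in $Q$. The matrix $\mathbf{M}$ is defined by $M_{i,j}=|\{g\in\operatorname{terms}(P_j)\mid \check{g}\mid \check{f}\}| \pmod 2$, where $\operatorname{ev}(P_j)$ is row $j$ of $\mathbf{P}\boldsymbol{G}_N$ and $\operatorname{ev}(f)$ is row $i$ of $\boldsymbol{G}_N$. *)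

From mathcomp Require Import all_boot all_algebra.
Set Implicit Arguments. Unset Strict Implicit. Unset Printing Implicit Defensive.
Import GRing.Theory.
Local Open Scope ring_scope.

Definition bitn (n k : nat) : bool := odd (n %/ 2 ^ k).

(* Elements of R_m = F_2[x_0..x_{m-1}]/(x_i^2 - x_i): an element is an
   F_2-combination of squarefree monomials; a monomial x_{k1}...x_{kr} is
   represented by its set of variables {k1,...,kr} : {set 'I_m}, and a
   polynomial Q by its set of monomials (= terms Q). *)
Definition monomial (m : nat) := {set 'I_m}.
Definition Rpoly (m : nat) := {set {set 'I_m}}.
Definition terms (m : nat) (Q : Rpoly m) : {set {set 'I_m}} := Q.

(* multiplicative complement  check h = x_0...x_{m-1} / h *)
Definition mcompl (m : nat) (h : monomial m) : monomial m := ~: h.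
Definition mdvd (m : nat) (f g : monomial m) : bool := f \subset g.

Definition row_mono (m : nat) (i : nat) : monomial m :=
  [set k : 'I_m | bitn (2 ^ m - 1 - i) k].

(* G_N = [[1,0],[1,1]]^{(x) m}, entrywise: the Kronecker power entry is the
   product over the m binary digits of the 2x2 kernel entries. *)
Definition kernel2 (a b : bool) : 'F_2 := if b then (if a then 1 else 0) else 1.
Definition GN (m : nat) : 'M['F_2]_(2 ^ m) :=
  \matrix_(i, j) \prod_(k < m) kernel2 (bitn i k) (bitn j k).

(* The point of F_2^m indexing column j (the ordering of evaluation points
   making row i of G_N equal to ev (row_mono i)). *)
Definition point (m : nat) (j : nat) (k : 'I_m) : 'F_2 :=
  (bitn (2 ^ m - 1 - j) k)%:R.

Definition mono_eval (m : nat) (h : monomial m) (x : 'I_m -> 'F_2) : 'F_2 :=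
  \prod_(k in h) x k.
Definition ev (m : nat) (Q : Rpoly m) : 'rV['F_2]_(2 ^ m) :=
  \row_(j < 2 ^ m) \sum_(g in terms Q) mono_eval g (point j).

Definition unit_upper (n : nat) (P : 'M['F_2]_n) : Prop :=
  (forall i j : 'I_n, (j < i)%N -> P i j = 0) /\ (forall i : 'I_n, P i i = 1).

Definition Mmat (m : nat) (Pj : 'I_(2 ^ m) -> Rpoly m) : 'M['F_2]_(2 ^ m) :=
  \matrix_(i, j)
    (#|[set g in terms (Pj j) |
         mdvd (mcompl g) (mcompl (row_mono m i))]|)%:R.

From mathcomp Require Import all_boot all_algebra.
From mathcomp Require Import zify.
Set Implicit Arguments. Unset Strict Implicit. Unset Printing Implicit Defensive.
Import GRing.Theory.
Local Open Scope ring_scope.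

(* Writing R_c for [row_mono m c], G_N is the zeta matrix of the subset
   lattice, G_N(a, b) = [R_a \subset R_b], and ev Q takes the value
   sum_(g in Q) [g \subset R_c] at column c.  Over F_2 this zeta transform is
   inverted by summing over the supersets of ~S, because
   sum_(x \supset ~S) [g \subset x] = 2 ^ |S :\: g| = [S \subset g].
   Summing both sides of ev (P_j) = sum_l P_jl row_l(G_N) over the supersets
   of ~R_i thus gives #{g in P_j | R_i \subset g} = sum_l [R_i \subset R_l] P_jl. *)

Lemma bitn0 n : bitn n 0 = odd n.
Proof. by rewrite /bitn expn0 divn1. Qed.

Lemma bitnS n k : bitn n k.+1 = bitn n./2 k.
Proof. by rewrite /bitn expnS divnMA divn2. Qed.

Lemma half_ltn_exp2 m c : (c < 2 ^ m.+1)%N -> (c./2 < 2 ^ m)%N.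
Proof. by rewrite ltn_half_double -mul2n -expnS. Qed.

Lemma bitn_inj m a b : (a < 2 ^ m)%N -> (b < 2 ^ m)%N ->
  (forall k, (k < m)%N -> bitn a k = bitn b k) -> a = b.
Proof.
elim: m a b => [|m IHm] a b ha hb eq_bits; first by rewrite expn0 in ha hb; lia.
rewrite -(odd_double_half a) -(odd_double_half b) -!bitn0 eq_bits //.
congr (_ + _.*2)%N; apply: IHm; rewrite ?half_ltn_exp2 //.
by move=> k lt_km; rewrite -!bitnS eq_bits.
Qed.

Lemma bitn_compl m c k : (c < 2 ^ m)%N -> (k < m)%N ->
  bitn (2 ^ m - 1 - c) k = ~~ bitn c k.
Proof.
elim: m c k => [|m IHm] c k hc // hk.
have lt_half := half_ltn_exp2 hc.
have -> : (2 ^ m.+1 - 1 - c = ~~ odd c + (2 ^ m - 1 - c./2).*2)%N.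
  move: hc lt_half; rewrite expnS.
  by have := odd_double_half c; case: (odd c) => /= def_c; rewrite -{1 3}def_c; lia.
case: k hk => [|k] hk; first by rewrite !bitn0 oddD odd_double oddb addbF.
by rewrite !bitnS half_bit_double IHm.
Qed.

Lemma mem_row_mono m (c : 'I_(2 ^ m)) k : (k \in row_mono m c) = ~~ bitn c k.
Proof. by rewrite inE bitn_compl. Qed.

Lemma row_mono_inj m : injective (fun c : 'I_(2 ^ m) => row_mono m c).
Proof.
move=> a b /setP eq_ab; apply/val_inj => /=.
have ha := ltn_ord a; have hb := ltn_ord b.
suff : (2 ^ m - 1 - a = 2 ^ m - 1 - b)%N by lia.
apply: (@bitn_inj m); [lia | lia | move=> k hk].
by have := eq_ab (Ordinal hk); rewrite !inE.
Qed.

Lemma row_mono_bij m : bijective (fun c : 'I_(2 ^ m) => row_mono m c).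
Proof.
apply: inj_card_bij (@row_mono_inj m) _.
by rewrite -cardsT -powersetT card_powerset cardsT !card_ord.
Qed.

Lemma card_supsets (T : finType) (A : {set T}) :
  #|[set x : {set T} | A \subset x]| = (2 ^ #|~: A|)%N.
Proof.
rewrite -card_powerset.
have -> : [set x : {set T} | A \subset x] = @setC T @: powerset (~: A).
  apply/setP => x; rewrite inE; apply/idP/imsetP => [A_x | [y]].
    by exists (~: x); rewrite ?setCK // powersetE setCS.
  by rewrite powersetE => y_A ->; rewrite -setCS setCK.
exact/card_imset/setC_inj.
Qed.

Lemma natr_F2 n : n%:R = (odd n)%:R :> 'F_2.
Proof. by rewrite -modn2 Fp_nat_mod. Qed.

Lemma sum_supsets_subset (T : finType) (S g : {set T}) :
  \sum_(x : {set T} | ~: S \subset x) (g \subset x)%:R = (S \subset g)%:R :> 'F_2.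
Proof.
rewrite -natr_sum.
have -> : (\sum_(x : {set T} | ~: S \subset x) (g \subset x) =
           #|[set x : {set T} | ~: S :|: g \subset x]|)%N.
  rewrite -sum1dep_card big_mkcond [RHS]big_mkcond; apply: eq_bigr => x _.
  by rewrite subUset; case: (~: S \subset x); case: (g \subset x).
by rewrite card_supsets setCU setCK -setDE natr_F2 oddX orbF cards_eq0 setD_eq0.
Qed.

Lemma sum_supsets_zeta (I T : finType) (w : I -> 'F_2) (f : I -> {set T})
    (S : {set T}) :
  \sum_(x : {set T} | ~: S \subset x) \sum_i w i * (f i \subset x)%:R =
  \sum_i w i * (S \subset f i)%:R.
Proof.
by rewrite exchange_big; apply: eq_bigr => i _; rewrite -mulr_sumr sum_supsets_subset.
Qed.

Lemma prod_natr_F2 (I : finType) (A : {pred I}) (b : I -> bool) :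
  \prod_(k in A) (b k)%:R = [forall k in A, b k]%:R :> 'F_2.
Proof.
have [all_b | /forall_inPn[k kA /negbTE bk_false]] := boolP [forall k in A, b k].
  by apply: big1 => k kA; rewrite (forall_inP all_b).
by rewrite (bigD1 k) //= bk_false mul0r.
Qed.

Lemma kernel2E a b : kernel2 a b = (b ==> a)%:R.
Proof. by case: a; case: b. Qed.

Lemma GN_subset m (a b : 'I_(2 ^ m)) :
  GN m a b = (row_mono m a \subset row_mono m b)%:R.
Proof.
rewrite mxE; under eq_bigr => k _ do rewrite kernel2E.
rewrite prod_natr_F2; congr (nat_of_bool _)%:R.
apply/forall_inP/subsetP => [ba k | sub_ab k _].
  by rewrite !mem_row_mono; apply: contra; apply/implyP/ba.
by apply/implyP/contraLR; rewrite -!mem_row_mono; apply: sub_ab.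
Qed.

Lemma ev_subset m (Q : Rpoly m) (c : 'I_(2 ^ m)) :
  ev Q 0 c = \sum_g (g \in Q)%:R * (g \subset row_mono m c)%:R.
Proof.
rewrite mxE big_mkcond; apply: eq_bigr => g _.
case: (g \in Q); rewrite ?mul0r ?mul1r //.
rewrite /mono_eval /point; under eq_bigr => k _ do rewrite bitn_compl //.
rewrite prod_natr_F2; congr (nat_of_bool _)%:R.
by apply/forall_inP/subsetP => sub_g k /sub_g; rewrite mem_row_mono.
Qed.

Lemma Mmat_subset m (Pj : 'I_(2 ^ m) -> Rpoly m) i j :
  Mmat Pj i j = \sum_g (g \in Pj j)%:R * (row_mono m i \subset g)%:R.
Proof.
rewrite mxE -sum1_card natr_sum big_mkcond; apply: eq_bigr => g _.
rewrite inE /terms /mdvd /mcompl setCS.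
by case: (g \in Pj j); case: (row_mono m i \subset g); rewrite ?mul1r ?mul0r.
Qed.

Theorem proposition3 (m : nat) (hm : (1 <= m)%N)
  (P : 'M['F_2]_(2 ^ m)) (hP : unit_upper P)
  (Pj : 'I_(2 ^ m) -> Rpoly m)
  (hPj : forall j : 'I_(2 ^ m), ev (Pj j) = row j (P *m GN m)) :
  Mmat Pj = GN m *m P^T.
Proof.
have [row_mono_inv _ row_monoK] := row_mono_bij m.
apply/matrixP => i j; rewrite Mmat_subset -sum_supsets_zeta.
have ev_Pj (x : monomial m) :
    \sum_g (g \in Pj j)%:R * (g \subset x)%:R =
    \sum_l P j l * (row_mono m l \subset x)%:R.
  rewrite -(row_monoK x) /= -ev_subset hPj !mxE.
  by apply: eq_bigr => l _; rewrite GN_subset.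
under eq_bigr => x _ do rewrite ev_Pj.
by rewrite sum_supsets_zeta !mxE; apply: eq_bigr => l _; rewrite GN_subset mulrC mxE.
Qed.
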